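(* Let $(P, T, h)$ be an acyclic sensor network and let $P_{\chi}$ be a $\chi$-minimal model of $P$. Let $\widetilde{P}_{\chi} = \{x \in P_{\chi} \mid h(x) \ge 1\}$ with the order induced from $P$. Then \[ \int_{\widetilde{P}_{\chi}} h|_{\widetilde{P}_{\chi}} \, d\chi = \int_{P} h \, d\chi . \]
   Context: For a finite poset $P$, the zeta function is the $P \times P$ matrix with $\zeta(x,y)=1$ if $x \le y$ and $0$ otherwise; it is invertible, and the Euler characteristic is $\chi(P) = \sum_{x,y} \zeta^{-1}(x,y)$ ($\chi(\emptyset)=0$). A filter is an upward-closed subset; $\delta_S$ is the indicator function of $S$. Every $g : P \to \mathbb{Z}$ can be written as $g = \sum_i a_i \delta_{S_i}$ with $a_i \in \mathbb{Z}$ and $S_i$ filters; the Euler calculus is $\int_P g\, d\chi = \sum_i a_i \chi(S_i)$, independent of the representation; for a subposet $S$, $\int_S g|_S\, d\chi$ is computed in the poset $S$. A point $x$ of a finite poset $R$ is a $\chi$-point if $\chi(R_{>x}) = 1$, where $R_{>x} = \{y \in R \mid y > x\}$. A $\chi$-minimal model of $P$ is a subposet obtained from $P$ by repeatedly removing one point that is a $\chi$-point of the current subposet, until no $\chi$-points remain. An acyclic sensor network $(P,T,h)$ consists of a finite poset $P$, a finite set $T$ of targets, which are points of the Hasse diagram of $P$ viewed as a one-dimensional simplicial complex (each target lies at a node or in the interior of an edge), and the counting function $h : P \to \mathbb{Z}_{\ge 0}$, where $h(x)$ is the number of targets lying in the part of the Hasse diagram spanned by the prime ideal $P_{\le x}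 = \{y \in P \mid y \le x\}$ (i.e. at nodes of $P_{\le x}$ or on edges between nodes of $P_{\le x}$). *)

From HB Require Import structures.
From mathcomp Require Import all_boot all_order all_algebra.
Set Implicit Arguments. Unset Strict Implicit. Unset Printing Implicit Defensive.
Import Order.Theory GRing.Theory.

Local Open Scope ring_scope.

Section Defs.
Variables (d : Order.disp_t) (T : finPOrderType d).

Definition zeta_mx (S : {set T}) : 'M[int]_#|S| :=
  \matrix_(i, j) ((enum_val i <= enum_val j)%O : nat)%:R.

Definition euler_char (S : {set T}) : int :=
  \sum_i \sum_j (invmx (zeta_mx S)) i j.

Definition is_filter (S F : {set T}) : Prop :=
  F \subset S /\ forall x y, x \in F -> y \in S -> (x <= y)%O -> y \in F.

Definition is_euler_integral (S : {set T}) (g : T -> int) (v : int) : Prop :=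
  exists r : seq (int * {set T}),
    (forall p, p \in r -> is_filter S p.2) /\
    (forall x, x \in S -> g x = \sum_(p <- r) p.1 * (x \in p.2)%:R) /\
    v = \sum_(p <- r) p.1 * euler_char p.2.

Definition strict_up (R : {set T}) (x : T) : {set T} :=
  [set y in R | (x < y)%O].

Definition chi_point (R : {set T}) (x : T) : Prop :=
  x \in R /\ euler_char (strict_up R x) = 1.

Inductive chi_reduction : {set T} -> {set T} -> Prop :=
| chi_red_refl R : chi_reduction R R
| chi_red_step R x Q : chi_point R x -> chi_reduction (R :\ x) Q ->
    chi_reduction R Q.

Definition chi_minimal_model (Q : {set T}) : Prop :=
  chi_reduction [set: T] Q /\ forall x, ~ chi_point Q x.

Definition covers (x y : T) : bool :=
  (x < y)%O && [forall z : T, ~~ ((x < z)%O && (z < y)%O)].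

(* Targets: a finite type Tg with locations; inl x = at node x,
   inr (x, y) = in the interior of the Hasse edge x -< y. *)
Definition target_loc_ok (Tg : finType) (loc : Tg -> T + (T * T)) : Prop :=
  (forall t x y, loc t = inr (x, y) -> covers x y) /\
  (forall t1 t2 x, loc t1 = inl x -> loc t2 = inl x -> t1 = t2).

Definition in_ideal_part (x : T) (l : T + (T * T)) : bool :=
  match l with
  | inl y => (y <= x)%O
  | inr (y, z) => (y <= x)%O && (z <= x)%O
  end.

Definition count_fun (Tg : finType) (loc : Tg -> T + (T * T)) (x : T) : nat :=
  #|[set t : Tg | in_ideal_part x (loc t)]|.

End Defs.

(** The Euler characteristic of a subposet S is the total Möbius weight
    w_S(x) = sum_y zeta^{-1}(x, y), and w_S is the unique function on S whose
    sums over principal filters are all 1.  Uniqueness gives w_F = w_S on every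
    filter F of S, and the Euler integral of g over S is sum_x g(x) w_S(x).  A
    chi-point x has w_R(x) = 1 - chi(R_{>x}) = 0, so removing it changes no
    other weight: along a chi-reduction the weights survive on the model and
    vanish on the removed points.  Finally h is monotone, so its support in the
    model is a filter of the model, and both integrals are the same sum. *)

From mathcomp Require Import all_boot all_order all_algebra.
From mathcomp Require Import fingroup perm.
Set Implicit Arguments. Unset Strict Implicit. Unset Printing Implicit Defensive.
Import Order.Theory GRing.Theory.
Local Open Scope ring_scope.

Lemma inflationary_perm_eq1 (d : Order.disp_t) (T : porderType d) n
    (f : 'I_n -> T) (s : 'S_n) :
  injective f -> (forall i, (f i <= f (s i))%O) -> s = 1%g.
Proof.
move=> f_inj f_s; apply/permP => i; rewrite perm1.
have f_iter k : (f i <= f ((s ^+ k)%g i))%O.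
  elim: k => [|k IHk]; first by rewrite expg0 perm1.
  by rewrite expgSr permM (le_trans IHk (f_s _)).
(* s^-1 i is an iterate of s, hence f i <= f (s^-1 i) <= f i. *)
set j := (s ^+ #[s]%g.-1)%g i.
have sj : s j = i.
  by rewrite /j -permM -expgSr prednK ?order_gt0 // expg_order perm1.
have ji : j = i by apply: f_inj; apply/le_anti; rewrite f_iter andbT -sj f_s.
by rewrite -{2}sj ji.
Qed.

Section EulerWeight.
Variables (d : Order.disp_t) (T : finPOrderType d).
Implicit Types (S R Q F : {set T}) (g : T -> int) (x y : T).

Lemma det_zeta_mx S : \det (zeta_mx S) = 1.
Proof.
rewrite /determinant (bigD1 1%g) //= [X in _ + X]big1 ?addr0.
  rewrite odd_perm1 expr0 mul1r big1 // => i _.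
  by rewrite perm1 !mxE lexx.
move=> s s_neq1.
have : ~~ [forall i, (enum_val i <= enum_val (s i))%O].
  apply: contra s_neq1 => /forallP s_infl.
  by rewrite (inflationary_perm_eq1 (@enum_val_inj _ _) s_infl).
rewrite negb_forall => /existsP [i Hi].
by rewrite (bigD1 i) //= mxE (negbTE Hi) mul0r mulr0.
Qed.

Lemma zeta_mx_unit S : zeta_mx S \in unitmx.
Proof. by rewrite unitmxE det_zeta_mx unitr1. Qed.

(* The index set of [zeta_mx S] is [enum S]; the weight is 0 outside [S]. *)
Definition euler_weight S x : int :=
  \sum_(i < #|S| | enum_val i == x) \sum_j invmx (zeta_mx S) i j.

Lemma euler_weight_enum_val S (i : 'I_#|S|) :
  euler_weight S (enum_val i) = \sum_j invmx (zeta_mx S) i j.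
Proof.
rewrite /euler_weight (big_pred1 i) // => k /=.
by apply/eqP/eqP => [/enum_val_inj|->].
Qed.

Lemma sum_euler_weight S g :
  \sum_(x in S) g x * euler_weight S x =
  \sum_i g (enum_val i) * \sum_j invmx (zeta_mx S) i j.
Proof. by rewrite big_enum_val; apply: eq_bigr => i _; rewrite euler_weight_enum_val. Qed.

Lemma euler_charE S : euler_char S = \sum_(x in S) euler_weight S x.
Proof.
have := sum_euler_weight S (fun=> 1); under eq_bigr do rewrite mul1r.
by move=> ->; apply: eq_bigr => i _; rewrite mul1r.
Qed.

Lemma sum_up_euler_weight S x :
  x \in S -> \sum_(k in S | (x <= k)%O) euler_weight S k = 1.
Proof.
move=> xS; set a := enum_rank_in xS x.
have a_x : enum_val a = x by rewrite /a enum_rankK_in.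
have row_a1 : \sum_c (1%:M : 'M[int]_#|S|) a c = 1.
  rewrite (bigD1 a) //= mxE eqxx big1 ?addr0 // => c ca.
  by rewrite mxE eq_sym (negbTE ca).
have := congr1 (fun M : 'M[int]_#|S| => \sum_c M a c) (mulmxV (zeta_mx_unit S)).
rewrite /= row_a1 => <-; rewrite big_mkcondr /=.
transitivity (\sum_(k in S) ((x <= k)%O : nat)%:R * euler_weight S k).
  by apply: eq_bigr => k _; case: (x <= k)%O; rewrite ?mul1r ?mul0r.
rewrite sum_euler_weight; under [RHS]eq_bigr do rewrite mxE.
rewrite [RHS]exchange_big /=; apply: eq_bigr => b _.
by rewrite mulr_sumr; apply: eq_bigr => c _; rewrite !mxE a_x.
Qed.

Lemma card_strict_up_lt S x k :
  k \in S -> (x < k)%O -> (#|strict_up S k| < #|strict_up S x|)%N.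
Proof.
move=> kS xk; apply/proper_card/properP; split.
  by apply/subsetP => z; rewrite !inE => /andP[-> /(lt_trans xk)].
by exists k; rewrite !inE ?kS ?xk ?ltxx.
Qed.

Lemma up_sums_eq0 S (u : T -> int) :
  (forall x, x \in S -> \sum_(k in S | (x <= k)%O) u k = 0) ->
  {in S, forall x, u x = 0}.
Proof.
move=> u_up x; have [n] := ubnP #|strict_up S x|.
elim: n x => // n IHn x up_x xS; have := u_up x xS.
rewrite (bigD1 x) /= ?xS ?lexx // big1 ?addr0 // => k /andP[/andP[kS xk] kx].
apply: IHn (kS); rewrite -ltnS; apply: (leq_trans _ up_x); rewrite ltnS.
by apply: card_strict_up_lt => //; rewrite lt_def kx.
Qed.

Lemma euler_weight_unique S (u : T -> int) :
  (forall x, x \in S -> \sum_(k in S | (x <= k)%O) u k = 1) ->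
  {in S, forall x, u x = euler_weight S x}.
Proof.
move=> u_up x xS; apply/eqP; rewrite -subr_eq0; apply/eqP; move: x xS.
apply: (up_sums_eq0 (u := fun k => u k - euler_weight S k)) => x xS.
by rewrite sumrB u_up // sum_up_euler_weight ?subrr.
Qed.

Lemma euler_weight_sub S Q : Q \subset S ->
  (forall x, x \in Q -> \sum_(k in S | (x <= k)%O) euler_weight S k =
                        \sum_(k in Q | (x <= k)%O) euler_weight S k) ->
  {in Q, forall x, euler_weight S x = euler_weight Q x}.
Proof.
move=> QS up_eq; apply: euler_weight_unique => x xQ.
by rewrite -up_eq // sum_up_euler_weight // (subsetP QS).
Qed.

Lemma euler_weight_filter S F :
  is_filter S F -> {in F, forall x, euler_weight F x = euler_weight S x}.
Proof.
move=> [FS F_up] x xF; apply/esym; move: x xF.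
apply: euler_weight_sub => // x xF; apply: eq_bigl => k.
case kF: (k \in F); first by rewrite (subsetP FS).
by case kS: (k \in S) => //=; apply/negbTE; apply: contraFN kF; exact: F_up.
Qed.

Lemma strict_up_filter R x : is_filter R (strict_up R x).
Proof.
split; first by apply/subsetP => y; rewrite inE => /andP[].
by move=> y z; rewrite !inE => /andP[_ xy] -> yz; exact: lt_le_trans xy yz.
Qed.

Lemma up_filter R x : is_filter R [set y in R | (x <= y)%O].
Proof.
split; first by apply/subsetP => y; rewrite inE => /andP[].
by move=> y z; rewrite !inE => /andP[_ xy] -> yz; exact: le_trans xy yz.
Qed.

Lemma euler_weight_chi_point R x : chi_point R x -> euler_weight R x = 0.
Proof.
move=> [xR chi_up]; have := sum_up_euler_weight xR.
rewrite (bigD1 x) /= ?xR ?lexx //.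
suff -> : \sum_(k | (k \in R) && (x <= k)%O && (k != x)) euler_weight R k = 1.
  by move/(congr1 (fun z => z - 1)); rewrite addrK subrr.
rewrite -chi_up euler_charE; apply: esym; apply: eq_big => [k|k kx].
  by rewrite inE lt_def; case: (k \in R); case: (k != x); case: (x <= k)%O.
exact: (euler_weight_filter (strict_up_filter R x) kx).
Qed.

Lemma euler_weight_setD1 R x : chi_point R x ->
  {in R :\ x, forall y, euler_weight R y = euler_weight (R :\ x) y}.
Proof.
move=> x_chi; apply: euler_weight_sub; first exact: subD1set.
move=> y _; rewrite (bigID (fun k => k == x)) /= big1 ?add0r.
  by apply: eq_bigl => k; rewrite !inE andbC andbA.
by move=> k /andP[_ /eqP ->]; exact: euler_weight_chi_point.
Qed.

Lemma chi_reduction_euler_weight R Q : chi_reduction R Q ->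
  [/\ Q \subset R, {in Q, forall y, euler_weight R y = euler_weight Q y} &
      {in R :\: Q, forall y, euler_weight R y = 0}].
Proof.
elim=> [{}R|{}R x {}Q x_chi _ [QR weightQ weight0]].
  by split=> // y; rewrite setDv inE.
have xR := x_chi.1; split.
- exact: subset_trans QR (subD1set R x).
- by move=> y yQ; rewrite -weightQ // (euler_weight_setD1 x_chi) // (subsetP QR).
- move=> y; rewrite inE => /andP[yQ yR].
  have [->|yx] := eqVneq y x; first exact: euler_weight_chi_point.
  by rewrite (euler_weight_setD1 x_chi) ?weight0 // !inE ?yQ yx.
Qed.

Definition euler_integral S g : int := \sum_(x in S) g x * euler_weight S x.

Lemma euler_char_filter S F : is_filter S F ->
  euler_char F = \sum_(x in S) (x \in F)%:R * euler_weight S x.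
Proof.
move=> F_filter; have FS := F_filter.1.
rewrite euler_charE [RHS](big_setID F) /= (setIidPr FS) [X in _ + X]big1 ?addr0.
  by apply: eq_bigr => x xF; rewrite xF mul1r (euler_weight_filter F_filter).
by move=> x; rewrite inE => /andP[/negbTE -> _]; rewrite mul0r.
Qed.

Lemma is_euler_integralE S g v : is_euler_integral S g v -> v = euler_integral S g.
Proof.
move=> [r [r_filter [g_r ->]]]; rewrite /euler_integral.
under [RHS]eq_bigr => x xS do rewrite g_r // mulr_suml.
rewrite [RHS]exchange_big /= big_seq [RHS]big_seq; apply: eq_bigr => p pr.
rewrite (euler_char_filter (r_filter p pr)) mulr_sumr.
by apply: eq_bigr => x _; rewrite mulrA.
Qed.

(* On S, g = sum_x g(x) (delta_{S_{>=x}} - delta_{S_{>x}}). *)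
Lemma is_euler_integral_exists S g : exists v, is_euler_integral S g v.
Proof.
set r := [seq (g x, [set y in S | (x <= y)%O]) | x <- enum S] ++
         [seq (- g x, strict_up S x) | x <- enum S].
exists (\sum_(p <- r) p.1 * euler_char p.2), r; split; last split => //.
  move=> p; rewrite mem_cat => /orP[] /mapP [x _ ->].
    exact: up_filter.
  exact: strict_up_filter.
move=> y yS; rewrite big_cat !big_map !big_enum /= -big_split /=.
rewrite (bigD1 y) //= big1.
  by rewrite !inE yS lexx ltxx mulr1 mulr0 !addr0.
move=> x /andP[_ xy]; rewrite !inE yS /= lt_def eq_sym (negbTE xy) /=.
by rewrite mulNr addrN.
Qed.

Lemma is_euler_integralP S g v :
  is_euler_integral S g v <-> v = euler_integral S g.
Proof.
split; first exact: is_euler_integralE.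
have [w w_int] := is_euler_integral_exists S g.
by move=> ->; rewrite -(is_euler_integralE w_int).
Qed.

Lemma euler_integral_chi_reduction R Q g :
  chi_reduction R Q -> euler_integral Q g = euler_integral R g.
Proof.
case/chi_reduction_euler_weight => QR weightQ weight0.
rewrite /euler_integral [RHS](big_setID Q) /= (setIidPr QR) [X in _ + X]big1 ?addr0.
  by apply: eq_bigr => x xQ; rewrite weightQ.
by move=> x xRQ; rewrite weight0 ?mulr0.
Qed.

Lemma euler_integral_filter_support S F g : is_filter S F ->
  {in S :\: F, forall x, g x = 0} -> euler_integral F g = euler_integral S g.
Proof.
move=> F_filter g0; have FS := F_filter.1.
rewrite /euler_integral [RHS](big_setID F) /= (setIidPr FS) [X in _ + X]big1 ?addr0.
  by apply: eq_bigr => x xF; rewrite (euler_weight_filter F_filter).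
by move=> x xSF; rewrite g0 ?mul0r.
Qed.

End EulerWeight.

Lemma count_fun_monotone (d : Order.disp_t) (T : finPOrderType d)
    (Tg : finType) (loc : Tg -> T + (T * T)) (x y : T) :
  (x <= y)%O -> (count_fun loc x <= count_fun loc y)%N.
Proof.
move=> xy; apply/subset_leq_card/subsetP => t; rewrite !inE.
case: (loc t) => [z|[z w]] /=; first by move/le_trans; apply.
by case/andP => zx wx; rewrite (le_trans zx xy) (le_trans wx xy).
Qed.

Theorem theorem4p11 (d : Order.disp_t) (T : finPOrderType d)
  (Tg : finType) (loc : Tg -> T + (T * T))
  (Pchi : {set T}) :
  target_loc_ok loc ->
  chi_minimal_model Pchi ->
  let h : T -> int := fun x => Posz (count_fun loc x) in
  let Ptilde : {set T} := [set x in Pchi | (1 <= count_fun loc x)%N] in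
  (exists v, is_euler_integral Ptilde h v /\ is_euler_integral [set: T] h v) /\
  (forall v1 v2, is_euler_integral Ptilde h v1 ->
                 is_euler_integral [set: T] h v2 -> v1 = v2).
Proof.
(* Only the monotonicity of h matters; the target locations need not be valid. *)
move=> _ [reduction _] h Ptilde.
have Ptilde_filter : is_filter Pchi Ptilde.
  split; first by apply/subsetP => x; rewrite inE => /andP[].
  move=> x y; rewrite !inE => /andP[_ hx] -> xy.
  exact: leq_trans hx (count_fun_monotone loc xy).
have h_support : {in Pchi :\: Ptilde, forall x, h x = 0}.
  by move=> x; rewrite !inE => /andP[+ xP]; rewrite xP /h; case: count_fun.
have integral_eq : euler_integral Ptilde h = euler_integral [set: T] h.
  by rewrite (euler_integral_filter_support Ptilde_filter h_support)
             (euler_integral_chi_reduction _ reduction).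
split; last by move=> v1 v2 /is_euler_integralP -> /is_euler_integralP ->.
by exists (euler_integral Ptilde h); split; apply/is_euler_integralP; rewrite ?integral_eq.
Qed.
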